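(* Let $G$ be a finite set with $n=\#G\ge 1$ elements and let $s:G\to G$ be a translation on $G$. Then there exists a quasigroup operation $*$ on $G$ for which $s$ is an automorphism (i.e. $s(x*y)=s(x)*s(y)$ for all $x,y\in G$) if and only if $n$ is odd.
   Context: A binary operation $*$ on a set $G$ is a quasigroup operation if it is left and right cancelable: $x*y=x*z\Rightarrow y=z$ and $y*x=z*x\Rightarrow y=z$ for all $x,y,z\in G$. For a finite set $G$, a map $s:G\to G$ is called a translation on $G$ if for every $x\in G$ one has $G=\{s^k(x): k=0,1,\ldots,\#G-1\}$ (equivalently, $s$ is a cyclic permutation of $G$ of length $\#G$). *)

From mathcomp Require Import all_boot.
Set Implicit Arguments. Unset Strict Implicit. Unset Printing Implicit Defensive.

Definition quasigroup_op (G : Type) (op : G -> G -> G) : Prop :=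
  (forall x y z, op x y = op x z -> y = z) /\
  (forall x y z, op y x = op z x -> y = z).

Definition translation (G : finType) (s : G -> G) : Prop :=
  forall x y : G, exists k : nat, k < #|G| /\ y = iter k s x.

Definition is_aut_of (G : Type) (op : G -> G -> G) (s : G -> G) : Prop :=
  forall x y, s (op x y) = op (s x) (s y).

From mathcomp Require Import all_boot.
Set Implicit Arguments. Unset Strict Implicit.

(* A translation s of a finite set G with n = #|G| elements makes G a copy of
   Z/nZ: fixing a base point x0, k |-> s^k(x0) is onto G, n-periodic and
   injective modulo n, and s acts as k |-> k + 1.

   If n is odd, 2 is invertible modulo n, with inverse h = (n + 1)/2, and the
   "midpoint" operation s^a(x0) * s^b(x0) = s^(h(a + b))(x0) is a quasigroup
   operation commuting with s.

   Conversely, let * be a quasigroup operation with s as automorphism. Writing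
   x0 * s^t(x0) = s^(f t)(x0) and s^(-t)(x0) * x0 = s^(g t)(x0), cancellation
   makes f and g permutations of Z/nZ, and applying s^t to the second identity
   gives f t = g t + t (mod n): f is a complete mapping. Summing over t yields
   S = S + S (mod n) with S = 0 + 1 + ... + (n - 1) = n(n - 1)/2, which forces
   n to be odd. *)

Lemma odd_of_dvdn_bin2 n : 0 < n -> n %| 'C(n, 2) -> odd n.
Proof.
move=> n_gt0 /dvdnP[k def_bin2].
have := mul_bin_left n 1; rewrite bin1 def_bin2 mulnA => /eqP.
rewrite eqn_pmul2r // subn1 => /eqP pred_n.
by rewrite -(prednK n_gt0) -pred_n /= oddM.
Qed.

Lemma complete_mapping_odd n (f g : 'I_n -> 'I_n) :
  0 < n -> injective f -> injective g ->
  (forall t, f t = g t + t %[mod n]) -> odd n.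
Proof.
move=> n_gt0 f_inj g_inj fE.
pose S := \sum_(t < n) (t : nat).
have sum_perm (h : 'I_n -> 'I_n) : injective h -> \sum_(t < n) (h t : nat) = S.
  by move=> h_inj; rewrite /S [RHS](reindex_inj h_inj).
have : S + S = 0 + S %[mod n].
  rewrite -{1}(sum_perm g g_inj) -big_split /= -modn_summ.
  rewrite (eq_bigr (fun t => f t %% n)) => [|t _]; last by rewrite fE.
  by rewrite modn_summ sum_perm.
move/eqP; rewrite eqn_modDr mod0n => n_dvd_S.
have : n %| 'C(n, 2) by rewrite -bin2_sum big_mkord.
exact: odd_of_dvdn_bin2.
Qed.

Lemma unit_mul_mod_inj n u h a b :
  u * h = 1 %[mod n] -> h * a = h * b %[mod n] -> a = b %[mod n].
Proof.
move=> uh hab.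
have mulK c : u * (h * c) = c %[mod n] by rewrite mulnA -modnMml uh modnMml mul1n.
by rewrite -(mulK a) -(mulK b) -modnMmr hab modnMmr.
Qed.

Lemma subn_mod_inj n a b : a < n -> b < n -> n - a = n - b %[mod n] -> a = b.
Proof.
move=> a_lt b_lt /eqP; rewrite -(eqn_modDr (a + b)) {2}(addnC a b) !addnA.
rewrite !subnK; try exact: ltnW.
by rewrite !modnDl !modn_small // => /eqP.
Qed.

Lemma iter_aut (T : Type) (op : T -> T -> T) (s : T -> T) :
  is_aut_of op s -> forall k x y, iter k s (op x y) = op (iter k s x) (iter k s y).
Proof. by move=> s_aut; elim=> [|k IHk] x y //=; rewrite IHk s_aut. Qed.

Section Translation.
Variables (G : finType) (s : G -> G) (x0 : G).
Hypothesis s_tr : translation s.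

(* A translation is onto, hence a permutation of G. *)
Lemma translation_injective : injective s.
Proof.
have s_onto y : y \in codom s.
  have [k [_ ->]] := s_tr (s y) y.
  by rewrite -iterSr iterS codom_f.
apply/injectiveP/card_uniqP; rewrite size_codom.
by apply: eq_card => y; rewrite inE [_ \in _]s_onto.
Qed.

Lemma translation_fconnect y : fconnect s x0 y.
Proof. by have [k [_ ->]] := s_tr x0 y; apply: fconnect_iter. Qed.

Lemma translation_order : order s x0 = #|G|.
Proof. by apply: eq_card => y; rewrite !inE translation_fconnect. Qed.

Definition cyc k := iter k s x0.

Definition cyc_index y := findex s x0 y.

Lemma cyc_indexK y : cyc (cyc_index y) = y.
Proof. exact/iter_findex/translation_fconnect. Qed.

Lemma cyc_index_lt y : cyc_index y < #|G|.
Proof. by rewrite -translation_order findex_max ?translation_fconnect. Qed.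

Lemma cycS k : s (cyc k) = cyc k.+1.
Proof. by rewrite /cyc iterS. Qed.

Lemma cycD a b : cyc (a + b) = iter a s (cyc b).
Proof. exact: iterD. Qed.

Lemma cyc_card : cyc #|G| = x0.
Proof. by rewrite /cyc -translation_order; apply/iter_order/translation_injective. Qed.

Lemma cyc_period q k : cyc (k + q * #|G|) = cyc k.
Proof.
elim: q => [|q IHq]; first by rewrite addn0.
by rewrite mulSnr addnA cycD cyc_card -IHq.
Qed.

Lemma cyc_mod k : cyc (k %% #|G|) = cyc k.
Proof. by rewrite [in RHS](divn_eq k #|G|) addnC cyc_period. Qed.

Lemma eq_cyc a b : (cyc a = cyc b) <-> (a = b %[mod #|G|]).
Proof.
split=> [|eq_ab]; last by rewrite -cyc_mod eq_ab cyc_mod.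
have lt_mod k : k %% #|G| < order s x0.
  by rewrite translation_order ltn_pmod // -translation_order order_gt0.
rewrite -cyc_mod -(cyc_mod b) /cyc => eq_ab.
by rewrite -(findex_iter (lt_mod a)) eq_ab findex_iter.
Qed.

Lemma cyc_ord_inj (a b : 'I_#|G|) : cyc a = cyc b -> a = b.
Proof. by move/eq_cyc; rewrite !modn_small // => /val_inj. Qed.

Lemma odd_translation_aut_quasigroup :
  odd #|G| -> exists op : G -> G -> G, quasigroup_op op /\ is_aut_of op s.
Proof.
move=> odd_n; pose h := #|G|.+1./2.
have h2 : 2 * h = #|G|.+1 by rewrite mul2n -[RHS]odd_double_half /= odd_n.
have h_inv : 2 * h = 1 %[mod #|G|] by rewrite h2 -addn1 modnDl.
pose mid x y := cyc (h * (cyc_index x + cyc_index y)).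
have cyc_indexS x : cyc_index (s x) = (cyc_index x).+1 %[mod #|G|].
  by apply/eq_cyc; rewrite -cycS !cyc_indexK.
have mid_inj x y z : mid x y = mid x z -> y = z.
  move/eq_cyc/(unit_mul_mod_inj h_inv)/eqP; rewrite eqn_modDl !modn_small ?cyc_index_lt //.
  by move=> /eqP yz; rewrite -(cyc_indexK y) -(cyc_indexK z) yz.
exists mid; split; first split=> [x y z | x y z]; last move=> x y.
- exact: mid_inj.
- by rewrite /mid !(addnC _ (cyc_index x)); apply: mid_inj.
- rewrite /mid cycS; apply/eq_cyc.
  rewrite -modnMmr -modnDm !cyc_indexS modnDm modnMmr addSn addnS -addn2.
  by rewrite [in RHS]mulnDr (mulnC h 2) h2 addnS -addSn modnDr.
Qed.

Lemma translation_aut_quasigroup_odd (op : G -> G -> G) :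
  quasigroup_op op -> is_aut_of op s -> odd #|G|.
Proof.
move=> [op_injl op_injr] s_aut.
have n_gt0 : 0 < #|G| by apply/card_gt0P; exists x0.
pose ord_of y : 'I_#|G| := Ordinal (cyc_index_lt y).
have ord_ofK y : cyc (ord_of y) = y := cyc_indexK y.
have ord_of_inj : injective ord_of.
  by move=> y z eq_yz; rewrite -(ord_ofK y) eq_yz ord_ofK.
pose f (t : 'I_#|G|) := ord_of (op x0 (cyc t)).
pose g (t : 'I_#|G|) := ord_of (op (cyc (#|G| - t)) x0).
apply: (@complete_mapping_odd _ f g) => // [t1 t2 | t1 t2 | t].
- by move/ord_of_inj/op_injl/cyc_ord_inj.
- by move/ord_of_inj/op_injr/eq_cyc/subn_mod_inj => eq_t; apply/val_inj/eq_t.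
- apply/eq_cyc; rewrite addnC cycD !ord_ofK iter_aut // -cycD subnKC.
    by rewrite cyc_card.
  exact: ltnW.
Qed.

End Translation.

Theorem lemma2p1 (G : finType) (s : G -> G) :
  0 < #|G| -> translation s ->
  (exists op : G -> G -> G, quasigroup_op op /\ is_aut_of op s) <-> odd #|G|.
Proof.
move=> /card_gt0P[x0 _] s_tr; split.
- move=> [op [op_quasi s_aut]].
  exact: (translation_aut_quasigroup_odd x0 s_tr op_quasi s_aut).
- exact: odd_translation_aut_quasigroup x0 s_tr.
Qed.
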